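(* Let $G$ be a finite group and $T$ a $G$-Tambara functor. Then there is an isomorphism of frames $\mathrm{RadId}_G(T)\cong \Omega(\operatorname{Spec}_{\mathbf{Nak}}(T))$, where $\Omega(X)$ denotes the frame of open subsets of a space $X$.
   Context: All rings are commutative with unit. A $G$-Tambara functor $T$ consists of commutative rings $T(G/H)$ for subgroups $H\le G$ with restriction ring maps, additive transfer maps, multiplicative norm maps and conjugation isomorphisms satisfying the standard Tambara axioms (Hill–Mazur). A Tambara ideal is a family of ring ideals $I(G/H)\subseteq T(G/H)$ closed under restriction, transfer, norm and conjugation; it is proper if $1\notin I(G/G)$. $\langle x\rangle$ denotes the Tambara ideal generated by an element $x$; the product $IJ$ is the Tambara ideal generated by the levelwise products $I(G/H)J(G/H)$. The radical $\sqrt I$ has $\sqrt I(G/H)=\{x\mid \langle x\rangle^n\subseteq I\text{ for some }n\ge1\}$; $I$ is radical if $I=\sqrt I$. $\mathrm{RadId}_G(T)$ is the set of radical Tambara ideals ordered by inclusion (a frame with meets intersections and joins $\sqrt{\sum_\lambda I_\lambda}$). A proper Tambara ideal $P$ is prime if $IJ\subseteq P$ implies $I\subseteq P$ or $J\subseteq P$ for all Tambara ideals $I,J$. $\operatorname{Spec}_{\mathbf{Nak}}(T)$ is the set of prime Tambara ideals with the topology having the sets $V_H(x)=\{P\mid x\in P(G/H)\}$ ($H\le G$, $x\in T(G/H)$) as a subbasis of closed sets. *)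

From HB Require Import structures.
From mathcomp Require Import all_boot all_order all_algebra all_fingroup.
Unset Printing Implicit Defensive.
Import GRing.Theory.
Local Open Scope ring_scope.

(* The finite group G is the whole finGroupType gT; its subgroups are the
   {group gT}.  The
   structure maps are total functions which are only constrained (by the
   axioms below) in the meaningful situations:
     tres H K : T(G/H) -> T(G/K)      (restriction,  K <= H)
     ttr  H K : T(G/K) -> T(G/H)      (transfer,     K <= H)
     tnm  H K : T(G/K) -> T(G/H)      (norm,         K <= H)
     tcj g H K : T(G/H) -> T(G/K)     (conjugation,  K = H :^ g = g^-1 H g). *)
Record tambara_data (gT : finGroupType) := TambaraData {
  tT : {group gT} -> comPzRingType;
  tres : forall H K : {group gT}, tT H -> tT K;
  ttr : forall H K : {group gT}, tT K -> tT H;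
  tnm : forall H K : {group gT}, tT K -> tT H;
  tcj : forall (g : gT) (H K : {group gT}), tT H -> tT K
}.
Arguments tT {gT} t H.
Arguments tres {gT} t H K _.
Arguments ttr {gT} t H K _.
Arguments tnm {gT} t H K _.
Arguments tcj {gT} t g H K _.

Definition is_dcrep {gT : finGroupType} (L K : {set gT}) (x : gT) : bool :=
  [pick y in (L :* x * K)%g] == Some x.

(* Sections of  Z = coprod_i H/J_i  -->  H/K  (J_i <= K <= H): a function on
   left cosets C = xK in H/K choosing an index i and a left coset D = yJ_i
   contained in C; it is None outside H/K. *)
Definition tsection (gT : finGroupType) (n : nat) :=
  {ffun {set gT} -> option ('I_n * {set gT})}.

Definition is_tsection {gT : finGroupType} (H K : {set gT}) {n : nat}
    (J : 'I_n -> {group gT}) (s : tsection gT n) : bool :=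
  [forall C : {set gT},
     if C \in lcosets K H then
       (if s C is Some (i, D) then (D \in lcosets (J i) H) && (D \subset C)
        else false)
     else s C == None].

Definition sect_act {gT : finGroupType} {n : nat} (h : gT) (s : tsection gT n)
  : tsection gT n :=
  [ffun C => omap (fun p => (p.1, (h *: p.2)%g)) (s (h^-1 *: C)%g)].

Definition is_sect_rep {gT : finGroupType} (H K : {set gT}) {n : nat}
    (J : 'I_n -> {group gT}) (s : tsection gT n) : bool :=
  [pick t | is_tsection H K J t && [exists h in H, t == sect_act h s]] == Some s.

Definition sect_stab {gT : finGroupType} (H : {set gT}) {n : nat}
    (s : tsection gT n) : {group gT} :=
  (<< [set h in H | sect_act h s == s] >>)%G.

(* right-hand side of Tambara reciprocity:
   N_K^H (sum_i tr_{J_i}^K a_i)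
     = sum_{[s] in H\Sect} tr_{L_s}^H prod_{x in L_s\H/K}
          N_{L_s cap xKx^-1}^{L_s} res^{yJ_iy^-1}_{L_s cap xKx^-1} c_y (a_i)
   where s(xK) = (i, yJ_i). *)
Definition recip_term {gT : finGroupType} (T : tambara_data gT)
    (K L : {group gT}) {n : nat} (J : 'I_n -> {group gT})
    (a : forall i, tT T (J i)) (s : tsection gT n) (x : gT) : tT T L :=
  match s (x *: K)%g with
  | Some (i, D) =>
      let y := repr D in
      tnm T L (L :&: K :^ x^-1)%G
        (tres T (J i :^ y^-1)%G (L :&: K :^ x^-1)%G
           (tcj T y^-1 (J i) (J i :^ y^-1)%G (a i)))
  | None => 1
  end.

Definition recip_rhs {gT : finGroupType} (T : tambara_data gT)
    (H K : {group gT}) {n : nat} (J : 'I_n -> {group gT})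
    (a : forall i, tT T (J i)) : tT T H :=
  \sum_(s : tsection gT n | is_tsection H K J s && is_sect_rep H K J s)
     ttr T H (sect_stab H s)
       (\prod_(x in H | is_dcrep (sect_stab H s) K x)
           recip_term T K (sect_stab H s) J a s x).

Definition is_tambara {gT : finGroupType} (T : tambara_data gT) : Prop :=
  (forall (H K : {group gT}), K \subset H ->
     tres T H K 1 = 1 /\
     (forall x y, tres T H K (x + y) = tres T H K x + tres T H K y) /\
     (forall x y, tres T H K (x * y) = tres T H K x * tres T H K y)) /\
  (forall (H : {group gT}) x, tres T H H x = x) /\
  (forall (H K L : {group gT}) x, L \subset K -> K \subset H ->
     tres T K L (tres T H K x) = tres T H L x) /\
  (forall (H K : {group gT}) x y, K \subset H ->
     ttr T H K (x + y) = ttr T H K x + ttr T H K y) /\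
  (forall (H : {group gT}) x, ttr T H H x = x) /\
  (forall (H K L : {group gT}) x, L \subset K -> K \subset H ->
     ttr T H K (ttr T K L x) = ttr T H L x) /\
  (forall (H K : {group gT}), K \subset H ->
     tnm T H K 1 = 1 /\
     (forall x y, tnm T H K (x * y) = tnm T H K x * tnm T H K y)) /\
  (forall (H : {group gT}) x, tnm T H H x = x) /\
  (forall (H K L : {group gT}) x, L \subset K -> K \subset H ->
     tnm T H K (tnm T K L x) = tnm T H L x) /\
  (forall g (H K : {group gT}), (K :=: H :^ g)%g ->
     tcj T g H K 1 = 1 /\
     (forall x y, tcj T g H K (x + y) = tcj T g H K x + tcj T g H K y) /\
     (forall x y, tcj T g H K (x * y) = tcj T g H K x * tcj T g H K y)) /\
  (forall g h (H K L : {group gT}) x, (K :=: H :^ g)%g -> (L :=: K :^ h)%g ->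
     tcj T h K L (tcj T g H K x) = tcj T (g * h)%g H L x) /\
  (forall h (H : {group gT}) x, h \in H -> tcj T h H H x = x) /\
  (forall g (H K H' K' : {group gT}), K \subset H ->
     (H' :=: H :^ g)%g -> (K' :=: K :^ g)%g ->
     (forall x, tcj T g K K' (tres T H K x) = tres T H' K' (tcj T g H H' x)) /\
     (forall x, tcj T g H H' (ttr T H K x) = ttr T H' K' (tcj T g K K' x)) /\
     (forall x, tcj T g H H' (tnm T H K x) = tnm T H' K' (tcj T g K K' x))) /\
  (forall (H K : {group gT}) a b, K \subset H ->
     ttr T H K (a * tres T H K b) = ttr T H K a * b) /\
  (forall (H J K : {group gT}) a, J \subset H -> K \subset H ->
     tres T H J (ttr T H K a) =
     \sum_(x in H | is_dcrep J K x)
        ttr T J (J :&: K :^ x^-1)%G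
          (tcj T x^-1 (K :&: J :^ x)%G (J :&: K :^ x^-1)%G
             (tres T K (K :&: J :^ x)%G a))) /\
  (forall (H J K : {group gT}) a, J \subset H -> K \subset H ->
     tres T H J (tnm T H K a) =
     \prod_(x in H | is_dcrep J K x)
        tnm T J (J :&: K :^ x^-1)%G
          (tcj T x^-1 (K :&: J :^ x)%G (J :&: K :^ x^-1)%G
             (tres T K (K :&: J :^ x)%G a))) /\
  (forall (H K : {group gT}) (n : nat) (J : 'I_n -> {group gT})
          (a : forall i, tT T (J i)),
     K \subset H -> (forall i, J i \subset K) ->
     tnm T H K (\sum_(i < n) ttr T K (J i) (a i)) = recip_rhs T H K J a).

Record tambara (gT : finGroupType) := Tambara {
  tdata :> tambara_data gT;
  tdata_ax : is_tambara tdata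
}.

Definition tpred {gT : finGroupType} (T : tambara_data gT) :=
  forall H : {group gT}, tT T H -> Prop.

Definition tsub {gT : finGroupType} {T : tambara_data gT} (I J : tpred T) :=
  forall H x, I H x -> J H x.

Definition is_tideal {gT : finGroupType} {T : tambara_data gT} (I : tpred T)
  : Prop :=
  (forall H, I H 0) /\
  (forall H x y, I H x -> I H y -> I H (x + y)) /\
  (forall H x y, I H y -> I H (x * y)) /\
  (forall (H K : {group gT}) x, K \subset H -> I H x -> I K (tres T H K x)) /\
  (forall (H K : {group gT}) x, K \subset H -> I K x -> I H (ttr T H K x)) /\
  (forall (H K : {group gT}) x, K \subset H -> I K x -> I H (tnm T H K x)) /\
  (forall g (H K : {group gT}) x, (K :=: H :^ g)%g -> I H x -> I K (tcj T g H K x)).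

Definition tgen {gT : finGroupType} {T : tambara_data gT} (S : tpred T)
  : tpred T :=
  fun H x => forall I : tpred T, is_tideal I -> tsub S I -> I H x.

Definition tprinc {gT : finGroupType} {T : tambara_data gT} {H0 : {group gT}}
    (x0 : tT T H0) : tpred T :=
  tgen (fun H y => existT (fun K => tT T K) H y = existT _ H0 x0).

Definition lprod {gT : finGroupType} {T : tambara_data gT} (I J : tpred T)
  : tpred T :=
  fun H z => exists n (a b : 'I_n -> tT T H),
    (forall k, I H (a k)) /\ (forall k, J H (b k)) /\
    z = \sum_(k < n) a k * b k.

Definition tprod {gT : finGroupType} {T : tambara_data gT} (I J : tpred T)
  : tpred T := tgen (lprod I J).

(* I^n for n >= 1 (I^1 = I, I^(m+1) = I^m I) *)
Fixpoint tpow {gT : finGroupType} {T : tambara_data gT} (I : tpred T) (n : nat)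
  : tpred T :=
  match n with
  | 0 => I
  | 1 => I
  | m.+1 => tprod (tpow I m) I
  end.

Definition tsqrt {gT : finGroupType} {T : tambara_data gT} (I : tpred T)
  : tpred T :=
  fun H x => exists n : nat, (1 <= n)%N /\ tsub (tpow (tprinc x) n) I.

Definition is_radical {gT : finGroupType} {T : tambara_data gT} (I : tpred T)
  : Prop :=
  is_tideal I /\ (forall H x, I H x <-> tsqrt I H x).

Definition is_tprime {gT : finGroupType} {T : tambara_data gT} (P : tpred T)
  : Prop :=
  is_tideal P /\ ~ P [set: gT]%G 1 /\
  (forall I J : tpred T, is_tideal I -> is_tideal J ->
     tsub (tprod I J) P -> tsub I P \/ tsub J P).

Definition RadId {gT : finGroupType} (T : tambara_data gT) :=
  {I : tpred T | is_radical I}.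

Definition SpecNak {gT : finGroupType} (T : tambara_data gT) :=
  {P : tpred T | is_tprime P}.

Definition V_closed {gT : finGroupType} {T : tambara_data gT} {H : {group gT}}
    (x : tT T H) : SpecNak T -> Prop :=
  fun P => sval P H x.

(* open sets of the topology on Spec_Nak(T) having the V_H(x) as a subbasis of
   closed sets: unions of finite intersections of complements of V_H(x) *)
Definition is_open_spec {gT : finGroupType} {T : tambara_data gT}
    (U : SpecNak T -> Prop) : Prop :=
  forall P, U P -> exists (n : nat) (Hs : 'I_n -> {group gT})
                          (xs : forall k, tT T (Hs k)),
    (forall k, ~ V_closed (xs k) P) /\
    (forall Q, (forall k, ~ V_closed (xs k) Q) -> U Q).

Definition OpenSpec {gT : finGroupType} (T : tambara_data gT) :=
  {U : SpecNak T -> Prop | is_open_spec U}.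

(* isomorphism of frames RadId_G(T) -> Omega(Spec_Nak(T)): a bijection
   preserving binary meets (intersections on both sides), the top element and
   arbitrary joins (sqrt of the sum on the left, unions on the right). *)
Definition frame_iso {gT : finGroupType} {T : tambara_data gT}
    (phi : RadId T -> OpenSpec T) : Prop :=
  bijective phi /\
  (forall I J R : RadId T,
     (forall H x, sval R H x <-> sval I H x /\ sval J H x) ->
     forall P, sval (phi R) P <-> sval (phi I) P /\ sval (phi J) P) /\
  (forall R : RadId T, (forall H x, sval R H x) -> forall P, sval (phi R) P) /\
  (forall (S : RadId T -> Prop) (R : RadId T),
     (forall H x, sval R H x <->
        tsqrt (tgen (fun K y => exists I : RadId T, S I /\ sval I K y)) H x) ->
     forall P, sval (phi R) P <-> exists I : RadId T, S I /\ sval (phi I) P).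

(* A radical Tambara ideal I is sent to the open set D(I) of the primes not
   containing I, and an open set U back to the intersection of the primes
   outside U.  D preserves binary meets because a prime containing
   I :&: J, hence IJ, contains I or J, and joins because primes are radical.
   The substantial point is that a radical ideal is the intersection of the
   primes containing it: for x not in I, Zorn's lemma gives an ideal P
   containing I and maximal among those containing none of the iterated
   squares <x>^(2^k), and such a P is prime.  Zorn applies because every
   <x>^(2^k) is generated by finitely many elements: by the Mackey and Tambara
   reciprocity formulas, <a><b> is generated by the products
   N(res c_g a) * N(res c_g' b). *)
From mathcomp Require Import all_boot all_algebra all_fingroup.
From mathcomp Require boolp classical_sets.

Set Implicit Arguments.
Unset Strict Implicit.
Unset Printing Implicit Defensive.
Import GRing.Theory.

Section DoubleCosetsAndSections.
Local Open Scope group_scope.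
Variable gT : finGroupType.
Implicit Types H J K L : {group gT}.

Lemma exists_dcrep H L K :
  L \subset H -> K \subset H -> exists2 x, x \in H & is_dcrep L K x.
Proof.
move=> sLH sKH.
have dc_id y : y \in L :* 1 * K -> L :* y * K = L :* 1 * K.
  rewrite rcoset1 => /mulsgP[l k Ll Kk ->].
  by rewrite rcosetM rcoset_id // -mulgA lcoset_id.
have [y LKy pick_y] : exists2 y, y \in L :* 1 * K & [pick z in L :* 1 * K] = Some y.
  case: pickP => [y Hy|none]; first by exists y.
  by have := none 1; rewrite /= rcoset1 -{1}(mulg1 1) mem_mulg.
exists y; last by rewrite /is_dcrep (dc_id y LKy) pick_y.
move: LKy; rewrite rcoset1 => /mulsgP[l k Ll Kk ->].
by rewrite groupM // ?(subsetP sLH l Ll) ?(subsetP sKH k Kk).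
Qed.

Lemma conjI_conjV L M (x : gT) : L :&: M :^ x^-1 :=: (M :&: L :^ x) :^ x^-1.
Proof. by rewrite conjIg conjsgK setIC. Qed.

Lemma sect_actM n (g h : gT) (s : tsection gT n) :
  sect_act (g * h) s = sect_act g (sect_act h s).
Proof.
apply/ffunP=> C; rewrite !ffunE invMg lcosetM.
by case: (s _) => [[i D]|] //=; rewrite lcosetM.
Qed.

Lemma sect_act1 n (s : tsection gT n) : sect_act 1 s = s.
Proof.
apply/ffunP=> C; rewrite !ffunE invg1 lcoset1.
by case: (s _) => [[i D]|] //=; rewrite lcoset1.
Qed.

Lemma sect_stab_act H n (s : tsection gT n) h :
  h \in sect_stab H s -> sect_act h s = s.
Proof.
have stab_group : group_set [set h in H | sect_act h s == s].
  apply/group_setP; split; first by rewrite inE group1 sect_act1 eqxx.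
  move=> a b; rewrite !inE => /andP[Ha /eqP Ea] /andP[Hb /eqP Eb].
  by rewrite groupM // sect_actM Eb Ea eqxx.
by rewrite /sect_stab /= (gen_set_id stab_group) inE => /andP[_ /eqP].
Qed.

Lemma sect_stab_sub H n (s : tsection gT n) : sect_stab H s \subset H.
Proof. by rewrite gen_subG; apply/subsetP=> h; rewrite inE => /andP[]. Qed.

Lemma tsection_coset H K n (J : 'I_n -> {group gT}) (s : tsection gT n) x :
  is_tsection H K J s -> x \in H ->
  exists i D, s (x *: K) = Some (i, D) /\ D \in lcosets (J i) H.
Proof.
move=> /forallP /(_ (x *: K)) + Hx; rewrite mem_lcosets.
have -> : x \in H * K by rewrite -{1}(mulg1 x) mem_mulg.
by case: (s _) => [[i D]|] // /andP[DJ _]; exists i, D.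
Qed.

(* The stabiliser of s fixes the coset s(xK) = yJ_i, hence lies in the
   conjugate of J_i by the representative y. *)
Lemma sect_stab_conj_sub H K n (J : 'I_n -> {group gT}) (s : tsection gT n) x i D :
  is_tsection H K J s -> x \in H -> s (x *: K) = Some (i, D) ->
  sect_stab H s :&: K :^ x^-1 \subset J i :^ (repr D)^-1.
Proof.
move=> sec Hx sxK.
have [i' [D' [sxK' DJ]]] := tsection_coset sec Hx.
rewrite sxK in sxK'; case: sxK' DJ => <- <- DJ.
have [z Hz DE] := lcosetsP DJ.
set y := repr D.
have yD : y \in D by rewrite /y (@mem_repr _ _ z) // DE lcoset_refl.
have Dy : D = y *: J i.
  by rewrite DE; apply/esym/lcoset_eqP; rewrite -DE.
apply/subsetP=> h /setIP[stab_h hK].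
have := sect_stab_act stab_h => /ffunP /(_ (x *: K)).
rewrite ffunE -lcosetM.
have -> : (h^-1 * x) *: K = x *: K.
  apply/lcoset_eqP; rewrite mem_lcoset mulgA.
  by move: hK; rewrite mem_conjgV => hK; rewrite -mulgA -conjgE conjVg groupV.
rewrite sxK /= => -[hD]; rewrite mem_conjgV.
have : h * y \in D by rewrite -hD mem_lcoset mulgA mulVg mul1g.
by rewrite Dy mem_lcoset conjgE mulgA.
Qed.

End DoubleCosetsAndSections.

Local Open Scope ring_scope.

Section TambaraAxioms.
Variables (gT : finGroupType) (T : tambara gT).
Implicit Types H J K L : {group gT}.

Lemma tres1 H K : (K \subset H)%g -> tres T H K 1 = 1.
Proof. by case: (tdata_ax _ T) => ax _ /ax []. Qed.
Lemma tresD H K x y : (K \subset H)%g ->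
  tres T H K (x + y) = tres T H K x + tres T H K y.
Proof. by case: (tdata_ax _ T) => ax _ /ax [_ []]. Qed.
Lemma tresM H K x y : (K \subset H)%g ->
  tres T H K (x * y) = tres T H K x * tres T H K y.
Proof. by case: (tdata_ax _ T) => ax _ /ax [_ []]. Qed.
Lemma tres_id H x : tres T H H x = x.
Proof. by case: (tdata_ax _ T) => _ [ax _]; apply: ax. Qed.
Lemma tres_comp H K L x : (L \subset K)%g -> (K \subset H)%g ->
  tres T K L (tres T H K x) = tres T H L x.
Proof. by case: (tdata_ax _ T) => _ [_ [ax _]]; apply: ax. Qed.
Lemma ttrD H K x y : (K \subset H)%g ->
  ttr T H K (x + y) = ttr T H K x + ttr T H K y.
Proof. by case: (tdata_ax _ T) => _ [_ [_ [ax _]]]; apply: ax. Qed.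
Lemma ttr_id H x : ttr T H H x = x.
Proof. by case: (tdata_ax _ T) => _ [_ [_ [_ [ax _]]]]; apply: ax. Qed.
Lemma ttr_comp H K L x : (L \subset K)%g -> (K \subset H)%g ->
  ttr T H K (ttr T K L x) = ttr T H L x.
Proof. by case: (tdata_ax _ T) => _ [_ [_ [_ [_ [ax _]]]]]; apply: ax. Qed.
Lemma tnmM H K x y : (K \subset H)%g ->
  tnm T H K (x * y) = tnm T H K x * tnm T H K y.
Proof. by case: (tdata_ax _ T) => _ [_ [_ [_ [_ [_ [ax _]]]]]] /ax []. Qed.
Lemma tnm_id H x : tnm T H H x = x.
Proof. by case: (tdata_ax _ T) => _ [_ [_ [_ [_ [_ [_ [ax _]]]]]]]; apply: ax. Qed.
Lemma tnm_comp H K L x : (L \subset K)%g -> (K \subset H)%g ->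
  tnm T H K (tnm T K L x) = tnm T H L x.
Proof. by case: (tdata_ax _ T) => _ [_ [_ [_ [_ [_ [_ [_ [ax _]]]]]]]]; apply: ax. Qed.
Lemma tcjD g H K x y : (K :=: H :^ g)%g ->
  tcj T g H K (x + y) = tcj T g H K x + tcj T g H K y.
Proof. by case: (tdata_ax _ T) => _ [_ [_ [_ [_ [_ [_ [_ [_ [ax _]]]]]]]]] /ax [_ []]. Qed.
Lemma tcjM g H K x y : (K :=: H :^ g)%g ->
  tcj T g H K (x * y) = tcj T g H K x * tcj T g H K y.
Proof. by case: (tdata_ax _ T) => _ [_ [_ [_ [_ [_ [_ [_ [_ [ax _]]]]]]]]] /ax [_ []]. Qed.
Lemma tcj_comp g h H K L x : (K :=: H :^ g)%g -> (L :=: K :^ h)%g ->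
  tcj T h K L (tcj T g H K x) = tcj T (g * h)%g H L x.
Proof. by case: (tdata_ax _ T) => _ [_ [_ [_ [_ [_ [_ [_ [_ [_ [ax _]]]]]]]]]]; apply: ax. Qed.
Lemma tcj_inner h H x : h \in H -> tcj T h H H x = x.
Proof. by case: (tdata_ax _ T) => _ [_ [_ [_ [_ [_ [_ [_ [_ [_ [_ [ax _]]]]]]]]]]]; apply: ax. Qed.

Let tcj_natural g H K H' K' : (K \subset H)%g -> (H' :=: H :^ g)%g -> (K' :=: K :^ g)%g ->
  [/\ forall x, tcj T g K K' (tres T H K x) = tres T H' K' (tcj T g H H' x),
      forall x, tcj T g H H' (ttr T H K x) = ttr T H' K' (tcj T g K K' x) &
      forall x, tcj T g H H' (tnm T H K x) = tnm T H' K' (tcj T g K K' x)].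
Proof.
case: (tdata_ax _ T) => _ [_ [_ [_ [_ [_ [_ [_ [_ [_ [_ [_ [ax _]]]]]]]]]]]].
by move=> sKH eH eK; have [? [? ?]] := ax g H K H' K' sKH eH eK.
Qed.

Lemma tcj_tres g H K H' K' x : (K \subset H)%g -> (H' :=: H :^ g)%g -> (K' :=: K :^ g)%g ->
  tcj T g K K' (tres T H K x) = tres T H' K' (tcj T g H H' x).
Proof. by move=> sKH eH eK; case: (tcj_natural sKH eH eK). Qed.
Lemma tcj_ttr g H K H' K' x : (K \subset H)%g -> (H' :=: H :^ g)%g -> (K' :=: K :^ g)%g ->
  tcj T g H H' (ttr T H K x) = ttr T H' K' (tcj T g K K' x).
Proof. by move=> sKH eH eK; case: (tcj_natural sKH eH eK). Qed.
Lemma tcj_tnm g H K H' K' x : (K \subset H)%g -> (H' :=: H :^ g)%g -> (K' :=: K :^ g)%g ->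
  tcj T g H H' (tnm T H K x) = tnm T H' K' (tcj T g K K' x).
Proof. by move=> sKH eH eK; case: (tcj_natural sKH eH eK). Qed.

Lemma ttr_frobenius H K a b : (K \subset H)%g ->
  ttr T H K (a * tres T H K b) = ttr T H K a * b.
Proof.
by case: (tdata_ax _ T) =>
  _ [_ [_ [_ [_ [_ [_ [_ [_ [_ [_ [_ [_ [ax _]]]]]]]]]]]]]; apply: ax.
Qed.

Lemma tres_ttr_mackey H J K a : (J \subset H)%g -> (K \subset H)%g ->
  tres T H J (ttr T H K a) =
  \sum_(x in H | is_dcrep J K x)
     ttr T J (J :&: K :^ x^-1)%G
       (tcj T x^-1 (K :&: J :^ x)%G (J :&: K :^ x^-1)%G (tres T K (K :&: J :^ x)%G a)).
Proof.
by case: (tdata_ax _ T) =>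
  _ [_ [_ [_ [_ [_ [_ [_ [_ [_ [_ [_ [_ [_ [ax _]]]]]]]]]]]]]]; apply: ax.
Qed.

Lemma tres_tnm_mackey H J K a : (J \subset H)%g -> (K \subset H)%g ->
  tres T H J (tnm T H K a) =
  \prod_(x in H | is_dcrep J K x)
     tnm T J (J :&: K :^ x^-1)%G
       (tcj T x^-1 (K :&: J :^ x)%G (J :&: K :^ x^-1)%G (tres T K (K :&: J :^ x)%G a)).
Proof.
by case: (tdata_ax _ T) =>
  _ [_ [_ [_ [_ [_ [_ [_ [_ [_ [_ [_ [_ [_ [_ [ax _]]]]]]]]]]]]]]]; apply: ax.
Qed.

Lemma tnm_sum_ttr H K n (J : 'I_n -> {group gT}) (a : forall i, tT T (J i)) :
  (K \subset H)%g -> (forall i, J i \subset K)%g ->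
  tnm T H K (\sum_(i < n) ttr T K (J i) (a i)) = recip_rhs T H K J a.
Proof.
by case: (tdata_ax _ T) =>
  _ [_ [_ [_ [_ [_ [_ [_ [_ [_ [_ [_ [_ [_ [_ [_ ax]]]]]]]]]]]]]]]; apply: ax.
Qed.

Lemma tres0 H K : (K \subset H)%g -> tres T H K 0 = 0.
Proof. by move=> sKH; apply: (@addrI _ (tres T H K 0)); rewrite -tresD // !addr0. Qed.
Lemma ttr0 H K : (K \subset H)%g -> ttr T H K 0 = 0.
Proof. by move=> sKH; apply: (@addrI _ (ttr T H K 0)); rewrite -ttrD // !addr0. Qed.
Lemma tcj0 g H K : (K :=: H :^ g)%g -> tcj T g H K 0 = 0.
Proof. by move=> eK; apply: (@addrI _ (tcj T g H K 0)); rewrite -tcjD // !addr0. Qed.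

End TambaraAxioms.

Section IdealClosure.
Variables (gT : finGroupType) (T : tambara_data gT) (I : tpred T).
Arguments I : clear implicits.
Implicit Types H K : {group gT}.
Hypothesis idealI : is_tideal I.

Lemma tideal0 H : I H 0.
Proof. by case: idealI. Qed.
Lemma tidealD {H x y} : I H x -> I H y -> I H (x + y).
Proof. by case: idealI => _ [ax _]; apply: ax. Qed.
Lemma tidealMl {H} x {y} : I H y -> I H (x * y).
Proof. by case: idealI => _ [_ [ax _]]; apply: ax. Qed.
Lemma tidealMr {H x} y : I H x -> I H (x * y).
Proof. by rewrite mulrC; apply: tidealMl. Qed.
Lemma tideal_res {H K x} : (K \subset H)%g -> I H x -> I K (tres T H K x).
Proof. by case: idealI => _ [_ [_ [ax _]]]; apply: ax. Qed.
Lemma tideal_tr {H K x} : (K \subset H)%g -> I K x -> I H (ttr T H K x).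
Proof. by case: idealI => _ [_ [_ [_ [ax _]]]]; apply: ax. Qed.
Lemma tideal_nm {H K x} : (K \subset H)%g -> I K x -> I H (tnm T H K x).
Proof. by case: idealI => _ [_ [_ [_ [_ [ax _]]]]]; apply: ax. Qed.
Lemma tideal_cj {g H K x} : (K :=: H :^ g)%g -> I H x -> I K (tcj T g H K x).
Proof. by case: idealI => _ [_ [_ [_ [_ [_ ax]]]]]; apply: ax. Qed.

Lemma tideal_sum {H} (R : Type) (r : seq R) (P : pred R) (F : R -> tT T H) :
  (forall i, P i -> I H (F i)) -> I H (\sum_(i <- r | P i) F i).
Proof. by move=> IF; apply: big_ind => //; [apply: tideal0 | apply: @tidealD]. Qed.

End IdealClosure.

Section GeneratedIdeals.
Variables (gT : finGroupType) (T : tambara_data gT).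
Implicit Types (S I J : tpred T) (H K : {group gT}).

Lemma tsub_trans I J (E : tpred T) : tsub I J -> tsub J E -> tsub I E.
Proof. by move=> sIJ sJE H x /sIJ /sJE. Qed.

Lemma tgen_tideal S : is_tideal (tgen S).
Proof.
split; first by move=> H I iI _; apply: tideal0.
split; first by move=> H x y Sx Sy I iI sSI; apply: tidealD (Sx I iI sSI) (Sy I iI sSI).
split; first by move=> H x y Sy I iI sSI; apply: tidealMl (Sy I iI sSI).
split; first by move=> H K x sKH Sx I iI sSI; apply: tideal_res (Sx I iI sSI).
split; first by move=> H K x sKH Sx I iI sSI; apply: tideal_tr (Sx I iI sSI).
split; first by move=> H K x sKH Sx I iI sSI; apply: tideal_nm (Sx I iI sSI).
by move=> g H K x eK Sx I iI sSI; apply: tideal_cj (Sx I iI sSI).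
Qed.

Lemma sub_tgen S : tsub S (tgen S).
Proof. by move=> H x Sx I _; apply. Qed.

Lemma tgen_min S I : is_tideal I -> tsub S I -> tsub (tgen S) I.
Proof. by move=> iI sSI H x; apply. Qed.

Lemma tgenS S S' : tsub S S' -> tsub (tgen S) (tgen S').
Proof.
move=> sSS'; apply: tgen_min; first exact: tgen_tideal.
exact: tsub_trans sSS' (@sub_tgen S').
Qed.

Lemma tprinc_tideal H (x : tT T H) : is_tideal (tprinc x).
Proof. exact: tgen_tideal. Qed.

Lemma tprinc_mem H (x : tT T H) : tprinc x H x.
Proof. exact: sub_tgen. Qed.

Lemma tprinc_min H (x : tT T H) I : is_tideal I -> I H x -> tsub (tprinc x) I.
Proof.
move=> iI Ix; apply: tgen_min => // K y.
have memI (p : {K : {group gT} & tT T K}) : p = existT _ H x -> I (tag p) (tagged p) by move=> ->.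
exact: memI.
Qed.

Lemma lprod_subl I J : is_tideal I -> tsub (lprod I J) I.
Proof.
by move=> iI H z [n [a [b [Ia [_ ->]]]]]; apply: tideal_sum => // k _; apply: tidealMr.
Qed.

Lemma lprod_subr I J : is_tideal J -> tsub (lprod I J) J.
Proof.
by move=> iJ H z [n [a [b [_ [Jb ->]]]]]; apply: tideal_sum => // k _; apply: tidealMl.
Qed.

Lemma tprod_subl I J : is_tideal I -> tsub (tprod I J) I.
Proof. by move=> iI; apply: tgen_min => //; apply: lprod_subl. Qed.

Lemma tprod_subr I J : is_tideal J -> tsub (tprod I J) J.
Proof. by move=> iJ; apply: tgen_min => //; apply: lprod_subr. Qed.

Lemma lprodS I J I' J' : tsub I I' -> tsub J J' -> tsub (lprod I J) (lprod I' J').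
Proof.
move=> sII' sJJ' H z [n [a [b [Ia [Jb ->]]]]].
by exists n, a, b; split=> [k|]; [apply: sII' | split=> // k; apply: sJJ'].
Qed.

Lemma tprodS I J I' J' : tsub I I' -> tsub J J' -> tsub (tprod I J) (tprod I' J').
Proof. by move=> sII' sJJ'; apply: tgenS; apply: lprodS. Qed.

Lemma lprod_mul I J H a b : I H a -> J H b -> lprod I J H (a * b).
Proof. by exists 1%N, (fun=> a), (fun=> b); rewrite big_ord1. Qed.

Lemma tprod_mul I J H a b : I H a -> J H b -> tprod I J H (a * b).
Proof. by move=> Ia Jb; apply: sub_tgen; apply: lprod_mul. Qed.

Lemma chain_union_tideal (C : tpred T -> Prop) :
  (forall J, C J -> is_tideal J) ->
  (forall J1 J2, C J1 -> C J2 -> tsub J1 J2 \/ tsub J2 J1) ->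
  (exists J, C J) -> is_tideal (fun H x => exists2 J, C J & J H x).
Proof.
move=> idealC chainC [J0 CJ0].
split; first by move=> H; exists J0 => //; apply: tideal0 (idealC _ CJ0) H.
split.
  move=> H x y [J1 C1 J1x] [J2 C2 J2y].
  have [sJ12|sJ21] := chainC J1 J2 C1 C2.
    by exists J2 => //; apply: (tidealD (idealC _ C2) (sJ12 _ _ J1x)).
  by exists J1 => //; apply: (tidealD (idealC _ C1) J1x (sJ21 _ _ J2y)).
split; first by move=> H x y [J CJ Jy]; exists J => //; apply: (tidealMl (idealC _ CJ)).
split; first by move=> H K x sKH [J CJ Jx]; exists J => //; apply: (tideal_res (idealC _ CJ)).
split; first by move=> H K x sKH [J CJ Jx]; exists J => //; apply: (tideal_tr (idealC _ CJ)).
split; first by move=> H K x sKH [J CJ Jx]; exists J => //; apply: (tideal_nm (idealC _ CJ)).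
by move=> g H K x eK [J CJ Jx]; exists J => //; apply: (tideal_cj (idealC _ CJ)).
Qed.

Lemma tpow_tideal (J : tpred T) n : is_tideal J -> is_tideal (tpow J n).
Proof. by case: n => [|[|n]] // _; apply: tgen_tideal. Qed.

End GeneratedIdeals.

Section PrimeIdeals.
Variables (gT : finGroupType) (T : tambara_data gT).
Implicit Types H K : {group gT}.
Local Notation elt := {H : {group gT} & tT T H}.

Lemma tprime_tpow_mem (P : tpred T) H (y : tT T H) n :
  is_tprime P -> tsub (tpow (tprinc y) n) P -> P H y.
Proof.
move=> [_ [_ primeP]]; elim: n => [|[|n] IHn] /=; try by apply; apply: tprinc_mem.
have idealy := tprinc_tideal y.
case/(primeP _ _ (tpow_tideal n.+1 idealy) idealy) => [/IHn //|].
by apply; apply: tprinc_mem.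
Qed.

Lemma tprime_tideal (P : SpecNak T) : is_tideal (sval P).
Proof. by case: (svalP P). Qed.

Fixpoint tprinc_prod (A : eqType) (xs : A -> elt) (l : seq A) : tpred T :=
  if l is k :: l' then tprod (tprinc (tagged (xs k))) (tprinc_prod xs l') else fun _ _ => True.

Lemma tprinc_prod_tideal (A : eqType) (xs : A -> elt) l : is_tideal (tprinc_prod xs l).
Proof. by case: l => [|k l] /=; [do 6!split | apply: tgen_tideal]. Qed.

Lemma tprinc_prod_sub (A : eqType) (xs : A -> elt) l k :
  k \in l -> tsub (tprinc_prod xs l) (tprinc (tagged (xs k))).
Proof.
elim: l => [|k' l IHl] //=; rewrite inE => /predU1P[-> | /IHl].
  exact: tprod_subl (tprinc_tideal _).
by apply: tsub_trans; apply: tprod_subr (tprinc_prod_tideal _ _).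
Qed.

Lemma tprinc_prod_notin (A : eqType) (xs : A -> elt) l (P : SpecNak T) :
  (forall k, ~ sval P (tag (xs k)) (tagged (xs k))) -> ~ tsub (tprinc_prod xs l) (sval P).
Proof.
case: P => P [iP [P1 primeP]] /= Pxs; elim: l => [|k l IHl] /=; first by move/(_ _ 1 I).
case/(primeP _ _ (tprinc_tideal _) (tprinc_prod_tideal _ _)) => // sxP.
by apply: (Pxs k); apply: sxP; apply: tprinc_mem.
Qed.

End PrimeIdeals.

Section Reciprocity.
Variables (gT : finGroupType) (T : tambara gT).
Implicit Types H J K L M X : {group gT}.

(* Every summand of recip_rhs is a transfer of a product having a factor
   N res c_y (a_i), so it suffices that W absorbs these operations. *)
Lemma tnm_sum_ttr_closed (Q W : tpred T) :
  (forall L, Q L 0) -> (forall L u v, Q L u -> Q L v -> Q L (u + v)) ->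
  (forall H L u, (L \subset H)%g -> W L u -> Q H (ttr T H L u)) ->
  (forall L u r, W L u -> W L (u * r)) ->
  (forall L M X J y u, (M \subset L)%g -> (M \subset X)%g -> (X :=: J :^ y)%g ->
     W J u -> W L (tnm T L M (tres T X M (tcj T y J X u)))) ->
  forall H K n (J : 'I_n -> {group gT}) (a : forall i, tT T (J i)),
    (K \subset H)%g -> (forall i, J i \subset K)%g -> (forall i, W (J i) (a i)) ->
    Q H (tnm T H K (\sum_(i < n) ttr T K (J i) (a i))).
Proof.
move=> Q0 QD Qtr WM Wnm H K n J a sKH sJK Wa.
rewrite tnm_sum_ttr // /recip_rhs.
apply: (big_ind (Q H)) => // [u v|s /andP[sec _]]; first exact: QD.
apply: Qtr; first exact: sect_stab_sub.
have [x0 Hx0 rep_x0] := exists_dcrep (sect_stab_sub H s) sKH.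
rewrite (bigD1 x0) /=; last by rewrite Hx0.
apply: WM.
have [i [D [sxK _]]] := tsection_coset sec Hx0.
rewrite /recip_term sxK.
apply: Wnm => //; first exact: subsetIl.
exact: sect_stab_conj_sub sec Hx0 sxK.
Qed.

End Reciprocity.

Section LevelwiseSums.
Variables (gT : finGroupType) (T : tambara gT).
Implicit Types H K L : {group gT}.

Definition lsum (A B : tpred T) : tpred T :=
  fun H z => exists a b, A H a /\ B H b /\ z = a + b.
Arguments lsum : clear implicits.

Lemma lsum_tideal A B : is_tideal A -> is_tideal B -> is_tideal (lsum A B).
Proof.
move=> iA iB.
have lsum_add L a b : A L a -> B L b -> lsum A B L (a + b) by exists a, b.
have lsum0 L : lsum A B L 0 by rewrite -[0]addr0; apply: lsum_add; apply: tideal0.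
have lsumD L u v : lsum A B L u -> lsum A B L v -> lsum A B L (u + v).
  move=> [a [b [Aa [Bb ->]]]] [a' [b' [Aa' [Bb' ->]]]].
  by rewrite addrACA; apply: lsum_add; apply: tidealD.
split=> //; split=> //.
split=> [H x _ [a [b [Aa [Bb ->]]]]|].
  by rewrite mulrDr; apply: lsum_add; apply: tidealMl.
split=> [H K _ sKH [a [b [Aa [Bb ->]]]]|].
  by rewrite tresD //; apply: lsum_add; apply: tideal_res.
split=> [H K _ sKH [a [b [Aa [Bb ->]]]]|].
  by rewrite ttrD //; apply: lsum_add; apply: tideal_tr.
split=> [H K _ sKH [a [b [Aa [Bb ->]]]]|]; last first.
  move=> g H K _ eK [a [b [Aa [Bb ->]]]].
  by rewrite tcjD //; apply: lsum_add; apply: tideal_cj.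
pose c (i : 'I_2) := if i == ord0 then a else b.
have -> : a + b = \sum_(i < 2) ttr T K K (c i) by rewrite big_ord_recr big_ord1 !ttr_id.
apply: (tnm_sum_ttr_closed (W := fun L u => A L u \/ B L u)) => //.
- move=> H' L u sLH [Au|Bu].
    by rewrite -[ttr _ _ _ _]addr0; apply: lsum_add; [apply: tideal_tr | apply: tideal0].
  by rewrite -[ttr _ _ _ _]add0r; apply: lsum_add; [apply: tideal0 | apply: tideal_tr].
- by move=> L u r [Au|Bu]; [left|right]; apply: tidealMr.
- by move=> L M X J y u sML sMX eX [Au|Bu]; [left|right];
    apply: tideal_nm => //; apply: tideal_res => //; apply: tideal_cj.
- by move=> i; rewrite /c; case: (i == ord0); [left|right].
Qed.

Lemma lsum_subl A B : is_tideal B -> tsub A (lsum A B).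
Proof. by move=> iB H y Ay; exists y, 0; rewrite addr0; split=> //; split=> //; apply: tideal0. Qed.

Lemma lsum_subr A B : is_tideal A -> tsub B (lsum A B).
Proof. by move=> iA H y By; exists 0, y; rewrite add0r; split=> //; apply: tideal0. Qed.

Lemma tprod_lsum_sub P A B : is_tideal P ->
  tsub (tprod A B) P -> tsub (tprod (lsum P A) (lsum P B)) P.
Proof.
move=> iP sABP; apply: (tgen_min iP) => K _ [n [u [v [PAu [PBv ->]]]]].
apply: tideal_sum => // k _.
have [p [a [Pp [Aa ->]]]] := PAu k; have [p' [b [Pp' [Bb ->]]]] := PBv k.
rewrite mulrDl; apply: (tidealD iP); first exact: (tidealMr iP _ Pp).
rewrite mulrDr; apply: (tidealD iP); first exact: (tidealMl iP _ Pp').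
by apply: sABP; apply: tprod_mul.
Qed.

End LevelwiseSums.

Section PrincipalIdeals.
Variables (gT : finGroupType) (T : tambara gT) (H0 : {group gT}) (a : tT T H0).
Implicit Types H K L M X : {group gT}.

Definition conj_res M (z : tT T M) : Prop :=
  exists g, (M \subset H0 :^ g)%g /\ z = tres T (H0 :^ g)%G M (tcj T g H0 (H0 :^ g)%G a).

Definition norm_mult L (w : tT T L) : Prop :=
  exists M r z, (M \subset L)%g /\ conj_res z /\ w = r * tnm T L M z.

Lemma conj_res_res M M' (z : tT T M) :
  conj_res z -> (M' \subset M)%g -> conj_res (tres T M M' z).
Proof.
move=> [g [sMH0g ->]] sM'M; exists g; split; first exact: subset_trans sMH0g.
by rewrite tres_comp.
Qed.

Lemma conj_res_cj M M' h (z : tT T M) :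
  conj_res z -> (M' :=: M :^ h)%g -> conj_res (tcj T h M M' z).
Proof.
move=> [g [sMH0g ->]] eM'; exists (g * h)%g; split; first by rewrite eM' conjsgM conjSg.
rewrite (@tcj_tres _ _ h (H0 :^ g)%G M (H0 :^ (g * h))%G M') /= ?conjsgM //.
by rewrite (@tcj_comp _ _ g h H0 (H0 :^ g)%G (H0 :^ (g * h))%G) //= conjsgM.
Qed.

Lemma norm_multMr L (w r : tT T L) : norm_mult w -> norm_mult (w * r).
Proof.
move=> [M [r' [z [sML [cz ->]]]]].
by exists M, (r' * r), z; rewrite mulrAC.
Qed.

Lemma norm_mult_res L L' (w : tT T L) :
  norm_mult w -> (L' \subset L)%g -> norm_mult (tres T L L' w).
Proof.
move=> [M [r [z [sML [cz ->]]]]] sL'L.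
rewrite tresM // tres_tnm_mackey //.
have [x0 Lx0 rep_x0] := exists_dcrep sL'L sML.
rewrite (bigD1 x0) /=; last by rewrite Lx0.
set rest := \prod_(_ | _) _.
exists (L' :&: M :^ x0^-1)%G, (tres T L L' r * rest),
  (tcj T x0^-1 (M :&: L' :^ x0)%G (L' :&: M :^ x0^-1)%G (tres T M (M :&: L' :^ x0)%G z)).
split; first exact: subsetIl.
split; last by rewrite -[RHS]mulrA [rest * _]mulrC.
by apply: conj_res_cj; [apply: conj_res_res => //; apply: subsetIl | apply: conjI_conjV].
Qed.

Lemma norm_mult_cj L L' h (w : tT T L) :
  norm_mult w -> (L' :=: L :^ h)%g -> norm_mult (tcj T h L L' w).
Proof.
move=> [M [r [z [sML [cz ->]]]]] eL'.
rewrite tcjM // (@tcj_tnm _ _ h L M L' (M :^ h)%G) //.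
exists (M :^ h)%G, (tcj T h L L' r), (tcj T h M (M :^ h)%G z).
by rewrite eL' /= conjSg sML; split=> //; split=> //; apply: conj_res_cj.
Qed.

Lemma norm_mult_nm L K (w : tT T L) :
  norm_mult w -> (L \subset K)%g -> norm_mult (tnm T K L w).
Proof.
move=> [M [r [z [sML [cz ->]]]]] sLK.
rewrite tnmM // tnm_comp //.
by exists M, (tnm T K L r), z; split=> //; apply: subset_trans sLK.
Qed.

(* By tprinc_sub_form, every element of <a> has this normal form. *)
Inductive princ_form : forall K, tT T K -> Prop :=
| princ_form0 K : princ_form (0 : tT T K)
| princ_formD K (u v : tT T K) : princ_form u -> princ_form v -> princ_form (u + v)
| princ_form_norm K L (w : tT T L) :
    (L \subset K)%g -> norm_mult w -> princ_form (ttr T K L w).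

Lemma princ_form_sum K (R : Type) (r : seq R) (P : pred R) (F : R -> tT T K) :
  (forall i, P i -> princ_form (F i)) -> princ_form (\sum_(i <- r | P i) F i).
Proof.
move=> formF; apply: (big_ind (@princ_form K)) => //; first exact: princ_form0.
exact: princ_formD.
Qed.

Lemma princ_form_tr L K (z : tT T L) :
  princ_form z -> (L \subset K)%g -> princ_form (ttr T K L z).
Proof.
elim=> {L z} [L|L u v _ IHu _ IHv|L L' w sL'L nw] sLK.
- by rewrite ttr0 //; apply: princ_form0.
- by rewrite ttrD //; apply: princ_formD; [apply: IHu | apply: IHv].
- by rewrite ttr_comp //; apply: princ_form_norm => //; apply: subset_trans sLK.
Qed.

Lemma princ_formMl K (z r : tT T K) : princ_form z -> princ_form (r * z).
Proof.
move=> fz; elim: fz r => {K z} [K|K u v _ IHu _ IHv|K L w sLK nw] r.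
- by rewrite mulr0; apply: princ_form0.
- by rewrite mulrDr; apply: princ_formD.
- by rewrite mulrC -ttr_frobenius //; apply: princ_form_norm => //; apply: norm_multMr.
Qed.

Lemma princ_form_res K K' (z : tT T K) :
  princ_form z -> (K' \subset K)%g -> princ_form (tres T K K' z).
Proof.
elim=> {K z} [K|K u v _ IHu _ IHv|K L w sLK nw] sK'K.
- by rewrite tres0 //; apply: princ_form0.
- by rewrite tresD //; apply: princ_formD; [apply: IHu | apply: IHv].
rewrite tres_ttr_mackey //; apply: princ_form_sum => x _.
apply: princ_form_norm; first exact: subsetIl.
apply: norm_mult_cj; last exact: conjI_conjV.
by apply: norm_mult_res => //; apply: subsetIl.
Qed.

Lemma princ_form_cj K K' h (z : tT T K) :
  princ_form z -> (K' :=: K :^ h)%g -> princ_form (tcj T h K K' z).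
Proof.
elim=> {K z} [K|K u v _ IHu _ IHv|K L w sLK nw] eK'.
- by rewrite tcj0 //; apply: princ_form0.
- by rewrite tcjD //; apply: princ_formD; [apply: IHu | apply: IHv].
rewrite (@tcj_ttr _ _ h K L K' (L :^ h)%G) //.
by apply: princ_form_norm; [rewrite eK' /= conjSg | apply: norm_mult_cj].
Qed.

Lemma princ_form_decomp K (z : tT T K) : princ_form z ->
  exists n (p : 'I_n -> {L : {group gT} & tT T L}),
    (forall i, (tag (p i) \subset K)%g /\ norm_mult (tagged (p i))) /\
    z = \sum_(i < n) ttr T K (tag (p i)) (tagged (p i)).
Proof.
elim=> {K z} [K|K u v _ [n1 [p1 [h1 ->]]] _ [n2 [p2 [h2 ->]]]|K L w sLK nw].
- by exists 0%N, (fun=> existT _ K (0 : tT T K)); split; [case | rewrite big_ord0].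
- exists (n1 + n2)%N, (fun i => match split i with inl j => p1 j | inr j => p2 j end).
  split=> [i|]; first by case: (split i).
  by rewrite big_split_ord /=; congr (_ + _); apply: eq_bigr => i _;
    rewrite ?(unsplitK (inl i : 'I_n1 + 'I_n2)) ?(unsplitK (inr i : 'I_n1 + 'I_n2)).
- by exists 1%N, (fun=> existT _ L w); rewrite big_ord1.
Qed.

Lemma princ_form_nm K L (z : tT T L) :
  princ_form z -> (L \subset K)%g -> princ_form (tnm T K L z).
Proof.
move=> /princ_form_decomp [n [p [hp ->]]] sLK.
apply: (tnm_sum_ttr_closed (Q := fun K z => princ_form z) (W := fun L w => norm_mult w)).
- by move=> ?; apply: princ_form0.
- by move=> ????; apply: princ_formD.
- by move=> ????; apply: princ_form_norm.
- by move=> ????; apply: norm_multMr.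
- move=> L' M X J y u sML' sMX eX nu.
  by apply: norm_mult_nm => //; apply: norm_mult_res => //; apply: norm_mult_cj.
- exact: sLK.
- by move=> i; case: (hp i).
- by move=> i; case: (hp i).
Qed.

Lemma princ_form_tideal : is_tideal princ_form.
Proof.
split; first by move=> ?; apply: princ_form0.
split; first by move=> H x y; apply: princ_formD.
split; first by move=> H x y; apply: princ_formMl.
split; first by move=> H K x sKH fx; apply: princ_form_res.
split; first by move=> H K x sKH fx; apply: princ_form_tr.
split; first by move=> H K x sKH fx; apply: princ_form_nm.
by move=> g H K x eK fx; apply: princ_form_cj.
Qed.

Lemma princ_form_gen : princ_form a.
Proof.
have eH0 : (H0 :^ 1)%G = H0 by apply: val_inj; rewrite /= conjsg1.
set a1 := tres T (H0 :^ 1)%G H0 (tcj T 1 H0 (H0 :^ 1)%G a).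
have -> : a = ttr T H0 H0 (1 * tnm T H0 H0 a1).
  by rewrite /a1 eH0 tres_id tcj_inner ?group1 // tnm_id mul1r ttr_id.
apply: princ_form_norm => //; exists H0, 1, a1.
by split=> //; split=> //; exists 1%g; rewrite conjsg1.
Qed.

Lemma tprinc_sub_form : tsub (tprinc a) princ_form.
Proof. exact: tprinc_min princ_form_tideal princ_form_gen. Qed.

End PrincipalIdeals.

Section FinitelyGeneratedIdeals.
Variables (gT : finGroupType) (T : tambara gT).
Implicit Types H K L M : {group gT}.
Local Notation elt := {H : {group gT} & tT T H}.

Definition tfam (I : finType) (f : I -> elt) : tpred T :=
  fun H y => exists i, f i = existT _ H y.
Arguments tfam {I} f H y.

Lemma tfam_mem (I : finType) (f : I -> elt) i : tfam f (tag (f i)) (tagged (f i)).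
Proof. by exists i; case: (f i). Qed.

Lemma tfam_sub (I : finType) (f : I -> elt) (E : tpred T) :
  (forall i, E (tag (f i)) (tagged (f i))) -> tsub (tfam f) E.
Proof. by move=> Ef H y [i fi]; have := Ef i; rewrite fi. Qed.

Definition tfin_gen (E : tpred T) : Prop :=
  exists (I : finType) (f : I -> elt), tsub E (tgen (tfam f)) /\ tsub (tgen (tfam f)) E.

Definition tprod_index := ({group gT} * gT * gT * {group gT} * {group gT})%type.

(* Index (K, g, g', M, M') stands for N_M^K (res c_g a) * N_M'^K (res c_g' b),
   and for 0 when the subgroup conditions fail. *)
Definition tprod_gen Ha (a : tT T Ha) Hb (b : tT T Hb) (q : tprod_index) : elt :=
  let: (K, g, g', M, M') := q in
  if [&& (M \subset K)%g, (M' \subset K)%g, (M \subset Ha :^ g)%g & (M' \subset Hb :^ g')%g]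
  then existT _ K (tnm T K M (tres T (Ha :^ g)%G M (tcj T g Ha (Ha :^ g)%G a)) *
                   tnm T K M' (tres T (Hb :^ g')%G M' (tcj T g' Hb (Hb :^ g')%G b)))
  else existT _ K (0 : tT T K).

Section TwoPrincipalIdeals.
Variables (Ha Hb : {group gT}) (a : tT T Ha) (b : tT T Hb).
Local Notation gen_ab := (tgen (tfam (tprod_gen a b))).

Lemma tfam_tprod_gen K M M' (u : tT T M) (v : tT T M') :
  (M \subset K)%g -> (M' \subset K)%g -> conj_res a u -> conj_res b v ->
  tfam (tprod_gen a b) K (tnm T K M u * tnm T K M' v).
Proof.
move=> sMK sM'K [g [sMg ->]] [g' [sM'g' ->]].
by exists (K, g, g', M, M'); rewrite /= sMK sM'K sMg sM'g'.
Qed.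

Lemma norm_mult_princ_formM L (w v : tT T L) :
  norm_mult a w -> princ_form b v -> gen_ab L (w * v).
Proof.
move=> nw fv; elim: fv w nw => {L v} [L|L u v _ IHu _ IHv|L L' w' sL'L nw'] w nw.
- by rewrite mulr0; exact: (tideal0 (tgen_tideal _)).
- by rewrite mulrDr; exact: (tidealD (tgen_tideal _) (IHu _ nw) (IHv _ nw)).
rewrite mulrC -ttr_frobenius //; apply: (tideal_tr (tgen_tideal _) sL'L).
have [M [r [u [sML' [cu ->]]]]] := norm_mult_res nw sL'L.
case: nw' => [M' [r' [v [sM'L' [cv ->]]]]].
rewrite mulrACA (mulrC (tnm _ _ _ v)); apply: (tidealMl (tgen_tideal _)).
by apply: sub_tgen; apply: tfam_tprod_gen.
Qed.

Lemma princ_formM_gen K (u v : tT T K) : princ_form a u -> princ_form b v -> gen_ab K (u * v).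
Proof.
move=> fu; elim: fu v => {K u} [K|K u u' _ IHu _ IHu'|K L w sLK nw] v fv.
- by rewrite mul0r; exact: (tideal0 (tgen_tideal _)).
- by rewrite mulrDl; exact: (tidealD (tgen_tideal _) (IHu _ fv) (IHu' _ fv)).
rewrite -ttr_frobenius //; apply: (tideal_tr (tgen_tideal _) sLK).
by apply: norm_mult_princ_formM => //; apply: princ_form_res.
Qed.

Lemma tprod_tprinc_sub_gen : tsub (tprod (tprinc a) (tprinc b)) gen_ab.
Proof.
apply: tgen_min; first exact: tgen_tideal.
move=> K _ [n [u [v [au [bv ->]]]]].
apply: (tideal_sum (tgen_tideal _)) => k _.
by apply: princ_formM_gen; apply: tprinc_sub_form.
Qed.

Lemma gen_sub_tprod_tprinc : tsub gen_ab (tprod (tprinc a) (tprinc b)).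
Proof.
apply: tgen_min; first exact: tgen_tideal.
apply: tfam_sub => -[[[[K g] g'] M] M'] /=.
case: ifP => [/and4P[sMK sM'K sMg sM'g'] | _] /=; last exact: (tideal0 (tgen_tideal _)).
by apply: tprod_mul; apply: (tideal_nm (tgen_tideal _)) => //;
  apply: (tideal_res (tgen_tideal _)) => //; apply: (tideal_cj (tgen_tideal _)) => //;
  apply: tprinc_mem.
Qed.

End TwoPrincipalIdeals.

Section FamilySpan.
Variables (I : finType) (f : I -> elt).
Let idealf i := tprinc_tideal (tagged (f i)).

Definition tfam_span : tpred T :=
  fun H u => exists c : I -> tT T H,
    (forall i, tprinc (tagged (f i)) H (c i)) /\ u = \sum_i c i.
Arguments tfam_span : clear implicits.

Lemma tfam_span0 H : tfam_span H 0.
Proof. by exists (fun=> 0); split=> [i|]; [exact: (tideal0 (idealf i)) | rewrite big1]. Qed.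

Lemma tfam_spanD H u v : tfam_span H u -> tfam_span H v -> tfam_span H (u + v).
Proof.
move=> [c [fc ->]] [c' [fc' ->]]; exists (fun i => c i + c' i).
by rewrite big_split; split=> // i; apply: (tidealD (idealf i)).
Qed.

Lemma tfam_span_morph H K (phi : tT T H -> tT T K) u :
  {morph phi : x y / x + y} -> phi 0 = 0 ->
  (forall i x, tprinc (tagged (f i)) H x -> tprinc (tagged (f i)) K (phi x)) ->
  tfam_span H u -> tfam_span K (phi u).
Proof.
move=> phiD phi0 phi_f [c [fc ->]]; exists (fun i => phi (c i)).
by split=> [i|]; [apply: phi_f | rewrite (big_morph _ phiD phi0)].
Qed.

Lemma tfam_span_nm H K u : (K \subset H)%g -> tfam_span K u -> tfam_span H (tnm T H K u).
Proof.
move=> sKH [c [fc ->]].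
have -> : \sum_i c i = \sum_(j < #|I|) ttr T K K (c (enum_val (A := predT) j)).
  under [RHS]eq_bigr do rewrite ttr_id.
  by rewrite -(big_enum_val (A := predT)); apply: eq_bigl.
apply: (tnm_sum_ttr_closed (W := fun L w => exists i, tprinc (tagged (f i)) L w)).
- exact: tfam_span0.
- exact: tfam_spanD.
- move=> H' L v sLH' [i fv].
  exists (fun j => if j == i then ttr T H' L v else 0); split.
    move=> j; case: eqP => [->|_]; first exact: (tideal_tr (idealf i)).
    exact: (tideal0 (idealf j)).
  by rewrite -big_mkcond /= big_pred1_eq.
- by move=> L v r [i fv]; exists i; apply: (tidealMr (idealf i)).
- move=> L M X J y v sML sMX eX [i fv]; exists i.
  exact: (tideal_nm (idealf i) sML (tideal_res (idealf i) sMX (tideal_cj (idealf i) eX fv))).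
- exact: sKH.
- by [].
- by move=> j; exists (enum_val (A := predT) j); apply: fc.
Qed.

Lemma tfam_span_tideal : is_tideal tfam_span.
Proof.
split; first exact: tfam_span0.
split; first exact: tfam_spanD.
split=> [H x u|].
  apply: tfam_span_morph; [exact: mulrDr | exact: mulr0 | move=> i y].
  exact: (tidealMl (idealf i)).
split=> [H K u sKH|].
  apply: tfam_span_morph; [exact: (fun x y => tresD x y sKH) | exact: tres0 | move=> i y].
  exact: (tideal_res (idealf i)).
split=> [H K u sKH|].
  apply: tfam_span_morph; [exact: (fun x y => ttrD x y sKH) | exact: ttr0 | move=> i y].
  exact: (tideal_tr (idealf i)).
split; first exact: tfam_span_nm.
move=> g H K u eK.
apply: tfam_span_morph; [exact: (fun x y => tcjD x y eK) | exact: tcj0 | move=> i y].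
exact: (tideal_cj (idealf i)).
Qed.

Lemma tgen_tfam_sub_span : tsub (tgen (tfam f)) tfam_span.
Proof.
apply: tgen_min; first exact: tfam_span_tideal.
apply: tfam_sub => i.
exists (fun j => if j == i then tagged (f i) else 0); split.
  by move=> j; case: eqP => [->|_]; [apply: tprinc_mem | exact: (tideal0 (idealf j))].
by rewrite -big_mkcond /= big_pred1_eq.
Qed.

End FamilySpan.

Lemma tfin_gen_tprod (E : tpred T) : is_tideal E -> tfin_gen E -> tfin_gen (tprod E E).
Proof.
move=> iE [I [f [sEf sfE]]].
pose f2 (q : I * I * tprod_index) := tprod_gen (tagged (f q.1.1)) (tagged (f q.1.2)) q.2.
have sfiE i : tsub (tprinc (tagged (f i))) E.
  by apply: tprinc_min => //; apply: sfE; apply: sub_tgen; apply: tfam_mem.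
exists (Finite.clone (I * I * tprod_index)%type _), f2; split.
  apply: tgen_min; first exact: tgen_tideal.
  move=> K _ [n [u [v [Eu [Ev ->]]]]].
  apply: (tideal_sum (tgen_tideal _)) => k _.
  have [c [fc ->]] := tgen_tfam_sub_span (sEf _ _ (Eu k)).
  have [d [fd ->]] := tgen_tfam_sub_span (sEf _ _ (Ev k)).
  rewrite big_distrl; apply: (tideal_sum (tgen_tideal _)) => i _.
  rewrite big_distrr; apply: (tideal_sum (tgen_tideal _)) => j _.
  apply: (tgenS (S := tfam (tprod_gen (tagged (f i)) (tagged (f j))))).
    by move=> H y [q fq]; exists (i, j, q).
  by apply: tprod_tprinc_sub_gen; apply: tprod_mul.
apply: tgen_min; first exact: tgen_tideal.
apply: tfam_sub => -[[i j] q].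
apply: (tprodS (sfiE i) (sfiE j)); apply: gen_sub_tprod_tprinc.
by apply: sub_tgen; apply: (tfam_mem (tprod_gen (tagged (f i)) (tagged (f j))) q).
Qed.

Lemma tfin_gen_chain_sub (E : tpred T) (C : tpred T -> Prop) :
  is_tideal E -> tfin_gen E -> (forall J, C J -> is_tideal J) ->
  (forall J1 J2, C J1 -> C J2 -> tsub J1 J2 \/ tsub J2 J1) ->
  tsub E (fun H x => exists2 J, C J & J H x) -> exists2 J, C J & tsub E J.
Proof.
move=> iE [I [f [sEf sfE]]] idealC chainC sEC.
suff [J CJ fJ] : exists2 J, C J & forall i, i \in enum I -> J (tag (f i)) (tagged (f i)).
  exists J => //; apply: tsub_trans sEf _; apply: tgen_min; first exact: idealC.
  by apply: tfam_sub => i; apply: fJ; rewrite mem_enum.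
elim: (enum I) => [|i l [J CJ fJ]].
  by have [J CJ _] := sEC _ _ (tideal0 iE 1%G); exists J.
have [J' CJ' fiJ'] := sEC _ _ (sfE _ _ (sub_tgen (tfam_mem f i))).
have [sJJ'|sJ'J] := chainC J J' CJ CJ'.
  by exists J' => // i'; rewrite inE => /predU1P[->|/fJ/sJJ'].
by exists J => // i'; rewrite inE => /predU1P[->|/fJ]; [apply: sJ'J|].
Qed.

End FinitelyGeneratedIdeals.

Section PrimeAvoidance.
Variables (gT : finGroupType) (T : tambara gT).
Implicit Types H K : {group gT}.

Section Avoidance.
Variables (H0 : {group gT}) (x : tT T H0).

Fixpoint tsqpow (k : nat) : tpred T :=
  if k is k'.+1 then tprod (tsqpow k') (tsqpow k') else tprinc x.

Lemma tsqpow_tideal k : is_tideal (tsqpow k).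
Proof. by case: k => [|k]; apply: tgen_tideal. Qed.

Lemma tfin_gen_tsqpow k : tfin_gen (tsqpow k).
Proof.
elim: k => [|k IHk] /=; last exact: tfin_gen_tprod (tsqpow_tideal k) IHk.
exists unit, (fun=> existT _ H0 x); split.
  by apply: tprinc_min; [apply: tgen_tideal | apply: sub_tgen; exists tt].
by apply: tgen_min; [apply: tgen_tideal | apply: tfam_sub => _; apply: tprinc_mem].
Qed.

Lemma tsqpow_sub k m : (k <= m)%N -> tsub (tsqpow m) (tsqpow k).
Proof.
elim: m => [|m IHm]; first by rewrite leqn0 => /eqP ->.
rewrite leq_eqVlt => /predU1P[-> //|ltkm].
exact: tsub_trans (tprod_subl (tsqpow_tideal m)) (IHm ltkm).
Qed.

Variable I0 : tpred T.
Arguments I0 : clear implicits.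

Definition avoiding (J : tpred T) : Prop :=
  [/\ is_tideal J, tsub I0 J & forall k, ~ tsub (tsqpow k) J].

Lemma avoiding_chain_union (C : tpred T -> Prop) :
  (forall J, C J -> avoiding J) ->
  (forall J1 J2, C J1 -> C J2 -> tsub J1 J2 \/ tsub J2 J1) ->
  (exists J, C J) -> avoiding (fun H y => exists2 J, C J & J H y).
Proof.
move=> avC chainC [J0 CJ0].
have idealC J : C J -> is_tideal J by case/avC.
split; first exact: chain_union_tideal idealC chainC (ex_intro _ J0 CJ0).
  by move=> H y I0y; exists J0 => //; have [_ + _] := avC _ CJ0; apply.
move=> k /(tfin_gen_chain_sub (tsqpow_tideal k) (tfin_gen_tsqpow k) idealC chainC).
by case=> J /avC[_ _ avJ]; apply: avJ.
Qed.

Lemma exists_maximal_avoiding : avoiding I0 ->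
  exists2 P, avoiding P & forall J, avoiding J -> tsub P J -> tsub J P.
Proof.
move=> avI0.
pose R (s t : {J | avoiding J}) := boolp.asbool (tsub (sval s) (sval t)).
have [[P avP] maxP] : exists t, classical_sets.premaximal R t.
  apply: (classical_sets.ZL_preorder (exist _ I0 avI0)).
  - by move=> t; apply/boolp.asboolP.
  - move=> r s t /boolp.asboolP srs /boolp.asboolP sst.
    by apply/boolp.asboolP; apply: tsub_trans sst.
  move=> A chainA.
  pose C J := J = I0 \/ exists2 s, A s & J = sval s.
  have avC J : C J -> avoiding J by case=> [->|[s _ ->]]; last exact: svalP.
  have chainC J1 J2 : C J1 -> C J2 -> tsub J1 J2 \/ tsub J2 J1.
    case=> [->|[s1 A1 ->]] [->|[s2 A2 ->]]; try by [left | left; case: (svalP s2)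
      | right; case: (svalP s1)].
    by case: (chainA s1 s2 A1 A2) => /boolp.asboolP; [left|right].
  have avU := avoiding_chain_union avC chainC (ex_intro _ I0 (or_introl erefl)).
  exists (exist _ _ avU) => s As; apply/boolp.asboolP => H y sy.
  by exists (sval s) => //; right; exists s.
exists P => // J avJ sPJ.
by apply/boolp.asboolP; apply: (maxP (exist _ J avJ)); apply/boolp.asboolP.
Qed.

Lemma maximal_avoiding_tprime P :
  avoiding P -> (forall J, avoiding J -> tsub P J -> tsub J P) -> is_tprime P.
Proof.
move=> [iP sI0P avP] maxP; split=> //; split.
  move=> P1; apply: (avP 0%N) => K y _; rewrite -[y]mulr1; apply: (tidealMl iP).
  by rewrite -(tres1 T (subsetT K)); apply: (tideal_res iP (subsetT K)).
have escape C : is_tideal C -> ~ tsub C P -> exists k, tsub (tsqpow k) (lsum P C).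
  move=> iC nCP; apply: boolp.contrapT => noK; apply: nCP.
  apply: (tsub_trans (lsum_subr (B := C) iP)).
  apply: maxP; last exact: (lsum_subl (A := P) iC).
  split; [exact: lsum_tideal | exact: tsub_trans sI0P (lsum_subl (A := P) iC) |].
  by move=> k sk; apply: noK; exists k.
move=> A B iA iB sABP.
case: (boolp.pselect (tsub A P)) => [|nAP]; [by left | right].
apply: boolp.contrapT => nBP.
have [[k sA] [m sB]] := (escape A iA nAP, escape B iB nBP).
apply: (avP (maxn k m).+1); apply: tsub_trans (tprod_lsum_sub iP sABP).
by apply: tprodS; [apply: tsub_trans sA | apply: tsub_trans sB];
  apply: tsqpow_sub; rewrite ?leq_maxl ?leq_maxr.
Qed.

Lemma radical_avoiding : is_radical I0 -> ~ I0 H0 x -> avoiding I0.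
Proof.
move=> [iI0 radI0] I0Nx; split=> // k; elim: k => [|k IHk] /=.
  by move=> sxI0; apply: I0Nx; apply: sxI0; apply: tprinc_mem.
move=> sk1I0; apply: IHk => K q sq; apply/radI0; exists 2%N; split=> //=.
by apply: tsub_trans sk1I0; apply: tprodS; apply: tprinc_min => //; apply: tsqpow_tideal.
Qed.

Lemma exists_tprime_avoiding :
  is_radical I0 -> ~ I0 H0 x -> exists P, [/\ is_tprime P, tsub I0 P & ~ P H0 x].
Proof.
move=> radI0 I0Nx.
have [P avP maxP] := exists_maximal_avoiding (radical_avoiding radI0 I0Nx).
have [iP sI0P avxP] := avP.
exists P; split=> //; first exact: maximal_avoiding_tprime.
by move=> Px; apply: (avxP 0%N); apply: tprinc_min.
Qed.

End Avoidance.
End PrimeAvoidance.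

Section NakaokaSpectrum.
Variables (gT : finGroupType) (T : tambara gT).
Implicit Types H K : {group gT}.
Local Notation elt := {H : {group gT} & tT T H}.

Definition Dopen (I : tpred T) : SpecNak T -> Prop := fun P => ~ tsub I (sval P).

Lemma Dopen_open I : is_open_spec (Dopen I).
Proof.
move=> P IP.
have [H [y [Iy Py]]] : exists H (y : tT T H), I H y /\ ~ sval P H y.
  apply: boolp.contrapT => noy; apply: IP => H y Iy; apply: boolp.contrapT => Py.
  by apply: noy; exists H, y.
exists 1%N, (fun=> H), (fun=> y); split=> // Q Qy sIQ.
exact: (Qy ord0) (sIQ _ _ Iy).
Qed.

Definition RadId_open (I : RadId T) : OpenSpec T := exist _ _ (Dopen_open (I := sval I)).

Definition vanishing (U : OpenSpec T) : tpred T :=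
  fun H y => forall P : SpecNak T, ~ sval U P -> sval P H y.

Lemma vanishing_radical U : is_radical (vanishing U).
Proof.
have iU : is_tideal (vanishing U).
  split; first by move=> H P _; exact: (tideal0 (tprime_tideal P)).
  split; first by move=> H x y Ux Uy P UP; exact: (tidealD (tprime_tideal P) (Ux P UP) (Uy P UP)).
  split; first by move=> H x y Uy P UP; exact: (tidealMl (tprime_tideal P) _ (Uy P UP)).
  split; first by move=> H K x sKH Ux P UP; exact: (tideal_res (tprime_tideal P) sKH (Ux P UP)).
  split; first by move=> H K x sKH Ux P UP; exact: (tideal_tr (tprime_tideal P) sKH (Ux P UP)).
  split; first by move=> H K x sKH Ux P UP; exact: (tideal_nm (tprime_tideal P) sKH (Ux P UP)).
  by move=> g H K x eK Ux P UP; exact: (tideal_cj (tprime_tideal P) eK (Ux P UP)).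
split=> // H y; split=> [Uy|[n [_ syU]] P UP]; first by exists 1%N; split=> //; apply: tprinc_min.
exact: tprime_tpow_mem (svalP P) (tsub_trans syU (fun K z Uz => Uz P UP)).
Qed.

Definition open_RadId (U : OpenSpec T) : RadId T := exist _ _ (vanishing_radical U).

Lemma RadId_openK : cancel RadId_open open_RadId.
Proof.
case=> I radI; apply: boolp.eq_exist => /=.
apply: boolp.functional_extensionality_dep => H; apply: boolp.funext => y.
apply: boolp.propext; split=> [Uy | Iy P]; last first.
  move=> DP; apply: boolp.contrapT => Py; apply: DP => sIP.
  by apply: Py; apply: sIP.
apply: boolp.contrapT => Iy.
have [P [primeP sIP Py]] := exists_tprime_avoiding radI Iy.
by apply: Py; apply: (Uy (exist _ P primeP)); apply.
Qed.

Lemma open_RadIdK : cancel open_RadId RadId_open.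
Proof.
case=> U openU; apply: boolp.eq_exist => /=.
apply: boolp.funext => P; apply: boolp.propext; split=> [DP | UP].
  by apply: boolp.contrapT => UP; apply: DP => H y; apply.
have [n [Hs [xs [Pxs sQU]]]] := openU P UP.
pose ys k := existT _ (Hs k) (xs k) : elt.
have sprodU : tsub (tprinc_prod ys (enum 'I_n)) (vanishing (exist _ U openU)).
  move=> H y ys_y Q UQ.
  have [k Qk] : exists k, sval Q (Hs k) (xs k).
    by apply: boolp.contrapT => noK; apply: UQ; apply: sQU => k Qk; apply: noK; exists k.
  exact: (tprinc_min (tprime_tideal Q) Qk (tprinc_prod_sub (mem_enum _ k) ys_y)).
move=> sUP; apply: (@tprinc_prod_notin _ _ _ ys (enum 'I_n) P Pxs).
exact: tsub_trans sprodU sUP.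
Qed.

Lemma RadId_open_meet (I J R : RadId T) :
  (forall H x, sval R H x <-> sval I H x /\ sval J H x) ->
  forall P, sval (RadId_open R) P <-> sval (RadId_open I) P /\ sval (RadId_open J) P.
Proof.
move=> RIJ P; split=> [RP | [IP JP] sRP].
  by split=> sP; apply: RP => H x /RIJ[Ix Jx]; apply: sP.
have [[_ [_ primeP]] [iI _] [iJ _]] := And3 (svalP P) (svalP I) (svalP J).
have sIJP : tsub (tprod (sval I) (sval J)) (sval P).
  move=> H x IJx; apply: sRP; apply/RIJ.
  by split; [apply: tprod_subl IJx | apply: tprod_subr IJx].
by case: (primeP _ _ iI iJ sIJP) => [/IP | /JP].
Qed.

Lemma RadId_open_top (R : RadId T) :
  (forall H x, sval R H x) -> forall P, sval (RadId_open R) P.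
Proof. by move=> Rall P sRP; case: (svalP P) => _ [P1 _]; apply/P1/sRP. Qed.

Lemma RadId_open_join (S : RadId T -> Prop) (R : RadId T) :
  (forall H x, sval R H x <->
     tsqrt (tgen (fun K y => exists I : RadId T, S I /\ sval I K y)) H x) ->
  forall P, sval (RadId_open R) P <-> exists I : RadId T, S I /\ sval (RadId_open I) P.
Proof.
move=> Rjoin P /=; split=> [RP | [I [SI IP]] sRP]; last first.
  apply: IP => H y Iy; apply: sRP; apply/Rjoin; exists 1%N; split=> //.
  by apply: tprinc_min; [apply: tgen_tideal | apply: sub_tgen; exists I].
apply: boolp.contrapT => noI; apply: RP => H x /Rjoin[n [_ sxP]].
apply: tprime_tpow_mem (svalP P) (tsub_trans sxP _).
apply: tgen_min (tprime_tideal P) _ => K y [I [SI Iy]].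
apply: boolp.contrapT => Py; apply: noI; exists I; split=> // sIP.
exact: Py (sIP _ _ Iy).
Qed.

End NakaokaSpectrum.

Unset Implicit Arguments.

Theorem corollary5p6 (gT : finGroupType) (T : tambara gT) :
  exists phi : RadId T -> OpenSpec T, frame_iso phi.
Proof.
exists (@RadId_open gT T); split.
  exact: Bijective (@RadId_openK gT T) (@open_RadIdK gT T).
split; first exact: RadId_open_meet.
split; first exact: RadId_open_top.
exact: RadId_open_join.
Qed.
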